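(* Let $\mu$ be a monotone system over $\{0,1\}^V$ and $\theta\in(0,1)$, $T_1,T_2\ge1$. Let $(X^{(t)}_{\mu\text{-GD}})_{t\ge0}$ be the Glauber dynamics for $\mu$ started from $X^{(0)}_{\mu\text{-GD}}=\mathbf 1_V$, and let $(X^{(t)}_{\mathrm{alg}})_{t=0}^{T_1T_2}$ be the Markov chain generated by $\mathcal A_\mu(\theta,T_1,T_2)$. Then for every integer $0\le t\le T_1T_2$, \[ d_{\mathrm{TV}}(X^{(t)}_{\mu\text{-GD}},\mu)\le d_{\mathrm{TV}}(\mathsf{contr}(X^{(t)}_{\mathrm{alg}}),\mu), \] where $d_{\mathrm{TV}}$ between a random variable and a distribution means between its law and the distribution.
   Context: Partial order on $\{0,1\}^S$: coordinatewise. Monotone system: for every $v\in V$ and all feasible (positive-probability) $\sigma\preceq\tau$ in $\{0,1\}^{V\setminus\{v\}}$, $\mu^\sigma_v(1)\le\mu^\tau_v(1)$, where $\mu^\sigma_v$ is the conditional marginal at $v$. Glauber dynamics for $\mu$: pick $v$ uniformly, resample $X_v\sim\mu_v^{X_{V\setminus\{v\}}}$. Tilted distribution $(\theta*\mu)(\sigma)\propto\mu(\sigma)\theta^{\|\sigma\|_1}$. $\mathsf{lift}:\{0,1\}^V\to\{0,1,\star\}^V$ is random: independently per coordinate, $0\mapsto0$, $1\mapsto\star$ w.p. $1-\theta$ and $1\mapsto1$ w.p. $\theta$. $\mathsf{contr}$ maps $0\mapsto0$ and $1,\star\mapsto1$ coordinatewise. Algorithm $\mathcal A_\mu(\theta,T_1,T_2)$: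 set $X=\mathsf{lift}(\mathbf 1_V)$; repeat $T_1$ times: (a) $X\gets\mathsf{contr}(X)$; (b) $X\gets\mathsf{lift}(X)$, $S=\{v:X_v\ne\star\}$; (c) repeat $T_2$ times: pick $v\in V$ uniformly; if $v\in S$ resample $X_v\sim(\theta*\mu)_v^{\sigma_{V\setminus\{v\}}}$ with $\sigma=\mathsf{contr}(X)$, otherwise keep $X_v=\star$. $X^{(0)}_{\mathrm{alg}}=\mathsf{lift}(\mathbf 1_V)$ and $X^{(t)}_{\mathrm{alg}}$ is the state after the $t$-th single-site step in (c). *)

From HB Require Import structures.
From mathcomp Require Import all_boot all_order all_algebra.
Set Implicit Arguments. Unset Strict Implicit. Unset Printing Implicit Defensive.
Import Order.TTheory GRing.Theory Num.Theory.
Local Open Scope ring_scope.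

Section Defs.
Variable R : realFieldType.
Variable V : finType.

Definition config := {ffun V -> bool}.
(* lifted configurations in {0,1,star}^V: Some false = 0, Some true = 1, None = star *)
Definition lconfig := {ffun V -> option bool}.

Definition upd (T : Type) (x : {ffun V -> T}) (v : V) (b : T) : {ffun V -> T} :=
  [ffun u => if u == v then b else x u].

Definition is_distr (mu : config -> R) : Prop :=
  (forall x, 0 <= mu x) /\ \sum_(x : config) mu x = 1.

Definition feasible (mu : config -> R) (x : config) (v : V) : Prop :=
  0 < mu (upd x v true) + mu (upd x v false).

(* conditional marginal mu^{x_{V\{v}}}_v(1); convention: 1 if infeasible *)
Definition cond_marg (mu : config -> R) (x : config) (v : V) : R :=
  let a := mu (upd x v true) in let b := mu (upd x v false) in
  if a + b == 0 then 1 else a / (a + b).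

Definition monotone_system (mu : config -> R) : Prop :=
  forall (v : V) (s t : config),
    (forall u, u != v -> (s u <= t u)%N) ->
    feasible mu s v -> feasible mu t v ->
    cond_marg mu s v <= cond_marg mu t v.

Definition norm1 (x : config) : nat := \sum_(v : V) (x v : nat).

Definition tilt (theta : R) (mu : config -> R) (x : config) : R :=
  mu x * theta ^+ norm1 x / \sum_(y : config) mu y * theta ^+ norm1 y.

Definition ones : config := [ffun => true].

Definition dirac (T : finType) (a : T) (x : T) : R := if x == a then 1 else 0.

Definition mstep (T : finType) (K : T -> T -> R) (p : T -> R) (y : T) : R :=
  \sum_(x : T) p x * K x y.

Definition gd_kernel (mu : config -> R) (x y : config) : R :=
  #|V|%:R^-1 * \sum_(v : V)
    (if y == upd x v (y v) then
       (if y v then cond_marg mu x v else 1 - cond_marg mu x v)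
     else 0).

Definition law_gd (mu : config -> R) (t : nat) : config -> R :=
  iter t (mstep (gd_kernel mu)) (dirac ones).

Definition contr (y : lconfig) : config := [ffun v => y v != Some false].

Definition lift_kernel (theta : R) (x : config) (y : lconfig) : R :=
  \prod_(v : V)
    match x v, y v with
    | false, Some false => 1
    | false, _ => 0
    | true, Some true => theta
    | true, None => 1 - theta
    | true, Some false => 0
    end.

(* law of lift(contr(X)) when X has law p *)
Definition refresh (theta : R) (p : lconfig -> R) (y : lconfig) : R :=
  \sum_(x : lconfig) p x * lift_kernel theta (contr x) y.

Definition alg_kernel (theta : R) (mu : config -> R) (x y : lconfig) : R :=
  #|V|%:R^-1 * \sum_(v : V)
    (if x v is None then (if y == x then 1 else 0)
     else if (y == upd x v (y v)) && (y v != None) then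
       (if y v == Some true then cond_marg (tilt theta mu) (contr x) v
        else 1 - cond_marg (tilt theta mu) (contr x) v)
     else 0).

(* law of X_alg^{(t)}: X^(0) = lift(1_V); before the single-site steps
   t = i*T2 + 1 (i >= 0) the contr/lift steps (a),(b) are performed. *)
Fixpoint law_alg (theta : R) (mu : config -> R) (T2 t : nat) : lconfig -> R :=
  match t with
  | 0 => lift_kernel theta ones
  | t'.+1 =>
      let p := law_alg theta mu T2 t' in
      mstep (alg_kernel theta mu)
        (if (t' %% T2 == 0)%N then refresh theta p else p)
  end.

Definition contr_law (p : lconfig -> R) (z : config) : R :=
  \sum_(x : lconfig | contr x == z) p x.

Definition dTV (T : finType) (p q : T -> R) : R :=
  2^-1 * \sum_(x : T) `|p x - q x|.

End Defs.

(* Let p_t be the law of Glauber dynamics at time t, and order the lifted sites by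
   0 < 1 < star.  Two invariants are propagated along t.  First, p_t = f_t mu with f_t
   increasing (away from the all-ones state): a Glauber update averages f_t along lines with
   the conditional marginals of mu, which are monotone.  Second, lift(p_t) is stochastically
   dominated by the law of X_alg^(t).  A lifted Glauber update is dominated by an algorithm
   update of the lifted configuration: on each fibre of configurations agreeing off the
   updated site this is a three-point inequality, which holds because f_t increasing gives
   p_t(x^0) c <= p_t(x^1) (1 - c), with c the conditional marginal of mu at x.  Algorithm
   updates preserve domination since the tilted measure is again a monotone system, and so
   does the refresh contr-then-lift since lifting is monotone.  Finally, d_TV(p_t, mu) is
   attained on the up-set {f_t > 1}, whose probability can only grow under the domination. *)

From HB Require Import structures.
From mathcomp Require Import all_boot all_order all_algebra.
From mathcomp Require Import ring lra.
Import Order.TTheory GRing.Theory Num.Theory.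
Local Open Scope ring_scope.
Set Implicit Arguments. Unset Strict Implicit. Unset Printing Implicit Defensive.

Section Update.
Variable V : finType.

Lemma updE (T : Type) (x : {ffun V -> T}) v b u :
  upd x v b u = if u == v then b else x u.
Proof. by rewrite ffunE. Qed.

Lemma upd_at (T : Type) (x : {ffun V -> T}) v b : upd x v b v = b.
Proof. by rewrite updE eqxx. Qed.

Lemma upd_upd (T : Type) (x : {ffun V -> T}) v b c : upd (upd x v b) v c = upd x v c.
Proof. by apply/ffunP=> u; rewrite !updE; case: (u == v). Qed.

Lemma upd_self (T : Type) (x : {ffun V -> T}) v : upd x v (x v) = x.
Proof. by apply/ffunP=> u; rewrite updE; case: eqP => // ->. Qed.

Variable T : eqType.
Implicit Types x y : {ffun V -> T}.

Lemma eq_updP x y v :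
  reflect (forall u, u != v -> y u = x u) (y == upd x v (y v)).
Proof.
apply: (iffP eqP) => [-> u /negbTE uv | yx]; first by rewrite updE uv.
by apply/ffunP=> u; rewrite updE; case: eqP => [->|/eqP]; last exact: yx.
Qed.

Lemma eq_upd_sym x y v : (y == upd x v (y v)) = (x == upd y v (x v)).
Proof. by apply/eq_updP/eq_updP => yx u uv; rewrite yx. Qed.

Lemma upd_eq_upd x y v b : y == upd x v (y v) -> upd y v b = upd x v b.
Proof.
by move/eq_updP=> yx; apply/ffunP=> u; rewrite !updE; case: eqP => // /eqP /yx.
Qed.

End Update.

Section Sums.
Variables (R : realFieldType) (V : finType) (T : finType).
Implicit Types (x y : {ffun V -> T}) (h : {ffun V -> T} -> R).

Lemma sum_eq_upd x v h :
  \sum_(y : {ffun V -> T}) (if y == upd x v (y v) then h y else 0) = \sum_b h (upd x v b).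
Proof.
transitivity (\sum_b \sum_(y : {ffun V -> T}) (if y == upd x v b then h y else 0)); last first.
  apply: eq_bigr => b _; rewrite (bigD1 (upd x v b)) //= eqxx.
  by rewrite big1 ?addr0 // => y /negbTE ->.
rewrite exchange_big /=; apply: eq_bigr => y _.
rewrite (bigD1 (y v)) //= big1 ?addr0 // => b bn.
by case: eqP => // yE; move: bn; rewrite {1}yE upd_at eqxx.
Qed.

Lemma sum_ffun_fiber v (t0 : T) h :
  \sum_(y : {ffun V -> T}) h y = \sum_(y : {ffun V -> T} | y v == t0) \sum_b h (upd y v b).
Proof.
transitivity (\sum_(y : {ffun V -> T}) \sum_(y' : {ffun V -> T} | y' v == t0)
  (if y' == upd y v t0 then h y else 0)).
  apply: eq_bigr => y _; rewrite (bigD1 (upd y v t0)) /= ?upd_at // eqxx.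
  by rewrite big1 ?addr0 // => y' /andP[_ /negbTE ->].
rewrite exchange_big /=; apply: eq_bigr => y' /eqP y't0.
by rewrite -sum_eq_upd; apply: eq_bigr => y _; rewrite -y't0 eq_upd_sym.
Qed.

End Sums.

Lemma sum_option_bool (R : realFieldType) (f : option bool -> R) :
  \sum_o f o = f None + f (Some true) + f (Some false).
Proof.
rewrite (bigD1 None) // (bigD1 (Some true)) // (bigD1 (Some false)) //=.
by rewrite big1 ?addr0 ?addrA // => -[[]|].
Qed.

Section Orders.
Variable V : finType.
Implicit Types (x y z : config V) (s t : lconfig V).

Definition le_config x y : bool := [forall u, (x u <= y u)%N].

Lemma le_configP x y : reflect (forall u, (x u <= y u)%N) (le_config x y).
Proof. exact: forallP. Qed.

Lemma le_config_refl : reflexive le_config.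
Proof. by move=> x; apply/le_configP. Qed.

Lemma le_config_trans : transitive le_config.
Proof.
by move=> y x z /le_configP xy /le_configP yz; apply/le_configP=> u; apply: leq_trans (yz u).
Qed.

Lemma le_config_upd x y v (b c : bool) :
  le_config x y -> (b <= c)%N -> le_config (upd x v b) (upd y v c).
Proof. by move=> /le_configP xy bc; apply/le_configP=> u; rewrite !updE; case: (u == v). Qed.

Lemma ones_le_config x : le_config (ones V) x -> x = ones V.
Proof.
by move/le_configP=> le1; apply/ffunP=> u; have := le1 u; rewrite !ffunE; case: (x u).
Qed.

Definition lrank (o : option bool) : nat :=
  match o with Some false => 0 | Some true => 1 | None => 2 end.

Definition le_lconfig s t : bool := [forall u, (lrank (s u) <= lrank (t u))%N].

Lemma le_lconfigP s t : reflect (forall u, (lrank (s u) <= lrank (t u))%N) (le_lconfig s t).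
Proof. exact: forallP. Qed.

Lemma le_lconfig_refl : reflexive le_lconfig.
Proof. by move=> s; apply/le_lconfigP. Qed.

Lemma le_lconfig_trans : transitive le_lconfig.
Proof.
by move=> t s r /le_lconfigP st /le_lconfigP tr; apply/le_lconfigP=> u; apply: leq_trans (tr u).
Qed.

Lemma le_lconfig_upd s t v o o' :
  le_lconfig s t -> (lrank o <= lrank o')%N -> le_lconfig (upd s v o) (upd t v o').
Proof. by move=> /le_lconfigP st oo; apply/le_lconfigP=> u; rewrite !updE; case: (u == v). Qed.

Lemma le_lconfig_updl s t v o :
  le_lconfig s t -> (lrank o <= lrank (t v))%N -> le_lconfig (upd s v o) t.
Proof. by move=> /le_lconfigP st ot; apply/le_lconfigP=> u; rewrite updE; case: eqP => [->|]. Qed.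

Lemma contr_mono s t : le_lconfig s t -> le_config (contr s) (contr t).
Proof.
move/le_lconfigP=> st; apply/le_configP=> u; have := st u; rewrite !ffunE.
by case: (s u) => [[]|]; case: (t u) => [[]|].
Qed.

End Orders.

Definition increasing (R : realFieldType) (V : finType) (F : lconfig V -> R) : Prop :=
  {homo F : s t / le_lconfig s t >-> s <= t}.


Section Kernel.
Variables (R : realFieldType) (S T : finType).
Implicit Types (K : S -> T -> R) (p : S -> R) (F : T -> R).

Definition kpush K p (y : T) : R := \sum_x p x * K x y.

Definition kexp K F (x : S) : R := \sum_y K x y * F y.

Lemma sum_kpush K p F : \sum_y kpush K p y * F y = \sum_x p x * kexp K F x.
Proof.
under eq_bigr do rewrite mulr_suml.
rewrite exchange_big /=; apply: eq_bigr => x _; rewrite mulr_sumr.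
by apply: eq_bigr => y _; rewrite mulrA.
Qed.

Lemma kpush_dirac K a : kpush K (dirac R a) =1 K a.
Proof.
move=> y; rewrite /kpush (bigD1 a) //= /dirac eqxx mul1r big1 ?addr0 //.
by move=> x /negbTE ->; rewrite mul0r.
Qed.

End Kernel.

Lemma sum_mstep (R : realFieldType) (T : finType) (K : T -> T -> R) (p F : T -> R) :
  \sum_y mstep K p y * F y = \sum_x p x * kexp K F x.
Proof. exact: sum_kpush. Qed.

Section Lift.
Variables (R : realFieldType) (V : finType) (theta : R).
Implicit Types (x : config V) (y : lconfig V).

Definition lift1 (b : bool) (o : option bool) : R :=
  match b, o with
  | false, Some false => 1
  | false, _ => 0
  | true, Some true => theta
  | true, None => 1 - theta
  | true, Some false => 0
  end.

Lemma lift_kernelE x y : lift_kernel theta x y = \prod_v lift1 (x v) (y v).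
Proof. by []. Qed.

Definition lift_kernel_off x y v : R := \prod_(u | u != v) lift1 (x u) (y u).

Lemma lift_kernel_upd x y v b o :
  lift_kernel theta (upd x v b) (upd y v o) = lift1 b o * lift_kernel_off x y v.
Proof.
rewrite lift_kernelE (bigD1 v) //= !upd_at; congr (_ * _).
by apply: eq_bigr => u /negbTE uv; rewrite !updE uv.
Qed.

Lemma lift_kernel_off_updl x y v b :
  lift_kernel_off (upd x v b) y v = lift_kernel_off x y v.
Proof. by apply: eq_bigr => u /negbTE uv; rewrite updE uv. Qed.

Lemma lift1_sum b : \sum_o lift1 b o = 1.
Proof. by rewrite sum_option_bool; case: b => /=; ring. Qed.

Lemma lift_kernel_sum x : \sum_y lift_kernel theta x y = 1.
Proof.
transitivity (\prod_v \sum_o lift1 (x v) o); first by rewrite bigA_distr_bigA.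
by rewrite big1 // => v _; rewrite lift1_sum.
Qed.

Lemma lift1_neq0 b o : lift1 b o != 0 -> (o != Some false) = b.
Proof. by case: b; case: o => [[]|] //=; rewrite eqxx. Qed.

Lemma lift_kernel_off_neq0 x y v :
  lift_kernel_off x y v != 0 -> forall u, u != v -> contr y u = x u.
Proof.
move=> nz u uv; rewrite ffunE; apply: lift1_neq0; apply: contraNneq nz => e.
by rewrite /lift_kernel_off (bigD1 u) //= e mul0r.
Qed.

Lemma lift_kernel_neq0 x y : lift_kernel theta x y != 0 -> contr y = x.
Proof.
move=> nz; apply/ffunP => v; rewrite ffunE; apply: lift1_neq0.
by apply: contraNneq nz => e; rewrite lift_kernelE (bigD1 v) //= e mul0r.
Qed.

Lemma contr_upd y v o : contr (upd y v o) = upd (contr y) v (o != Some false).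
Proof. by apply/ffunP => u; rewrite !ffunE; case: (u == v). Qed.

Lemma kexp_lift_contr (G : config V -> R) x :
  kexp (lift_kernel theta) (G \o @contr V) x = G x.
Proof.
rewrite /kexp -[RHS]mul1r -(lift_kernel_sum x) mulr_suml; apply: eq_bigr => y _ /=.
have [->|/lift_kernel_neq0 ->] := eqVneq (lift_kernel theta x y) 0; by rewrite ?mul0r.
Qed.

Lemma refreshE (nu : lconfig V -> R) :
  refresh theta nu =1 kpush (lift_kernel theta) (contr_law nu).
Proof.
move=> y; rewrite /refresh /kpush /contr_law.
rewrite (partition_big (@contr V) xpredT) //=; apply: eq_bigr => z _.
by rewrite mulr_suml; apply: eq_bigr => x /eqP ->.
Qed.

Lemma sum_contr_law (nu : lconfig V -> R) (G : config V -> R) :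
  \sum_y nu y * G (contr y) = \sum_x contr_law nu x * G x.
Proof.
rewrite (partition_big (@contr V) xpredT) //=; apply: eq_bigr => x _.
by rewrite /contr_law mulr_suml; apply: eq_bigr => y /eqP ->.
Qed.

Lemma sum_lift_fiber v (Phi : config V -> lconfig V -> R) :
  \sum_x \sum_y lift_kernel theta x y * Phi x y =
  \sum_(s : config V | s v == false) \sum_(y : lconfig V | y v == Some false)
     lift_kernel_off s y v * \sum_b \sum_o lift1 b o * Phi (upd s v b) (upd y v o).
Proof.
rewrite (sum_ffun_fiber v false); apply: eq_bigr => s _.
under eq_bigr do rewrite (sum_ffun_fiber v (Some false)).
rewrite exchange_big /=; apply: eq_bigr => y _.
rewrite mulr_sumr; apply: eq_bigr => b _; rewrite mulr_sumr; apply: eq_bigr => o _.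
by rewrite lift_kernel_upd mulrCA mulrA.
Qed.

Lemma kexp_lift_fiber F x v : kexp (lift_kernel theta) F x =
  \sum_(y : lconfig V | y v == Some false)
     lift_kernel_off x y v * \sum_o lift1 (x v) o * F (upd y v o).
Proof.
rewrite /kexp (sum_ffun_fiber v (Some false)); apply: eq_bigr => y _.
rewrite mulr_sumr; apply: eq_bigr => o _.
by rewrite -{1}(upd_self x v) lift_kernel_upd mulrCA mulrA.
Qed.

Hypothesis theta01 : 0 <= theta <= 1.

Lemma lift1_ge0 b o : 0 <= lift1 b o.
Proof. by case/andP: theta01 => ? ?; case: b; case: o => [[]|] //=; rewrite subr_ge0. Qed.

Lemma lift_kernel_off_ge0 x y v : 0 <= lift_kernel_off x y v.
Proof. by apply: prodr_ge0 => u _; apply: lift1_ge0. Qed.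

Lemma kexp_lift_upd_le F x v : increasing F -> x v = false ->
  kexp (lift_kernel theta) F x <= kexp (lift_kernel theta) F (upd x v true).
Proof.
move=> F_mono xv; rewrite !(kexp_lift_fiber F _ v); apply: ler_sum => y _.
rewrite lift_kernel_off_updl upd_at xv ler_wpM2l ?lift_kernel_off_ge0 //.
rewrite !sum_option_bool /= !mul0r !add0r mul1r.
have F01 : F (upd y v (Some false)) <= F (upd y v (Some true)).
  by apply: F_mono; rewrite le_lconfig_upd ?le_lconfig_refl.
have F0s : F (upd y v (Some false)) <= F (upd y v None).
  by apply: F_mono; rewrite le_lconfig_upd ?le_lconfig_refl.
case/andP: theta01 => t0 t1; nra.
Qed.

Lemma kexp_lift_mono F : increasing F ->
  {homo kexp (lift_kernel theta) F : x x' / @le_config V x x' >-> x <= x'}.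
Proof.
move=> F_mono; suff mono_card k (x x' : config V) : #|[pred u | x u != x' u]| = k ->
  le_config x x' -> kexp (lift_kernel theta) F x <= kexp (lift_kernel theta) F x'.
  by move=> x x'; apply: mono_card.
elim: k x x' => [|k IHk] x x' card_diff xx'.
  suff -> : x = x' by [].
  by apply/ffunP => u; apply/eqP; have := card0_eq card_diff u; rewrite !inE => /negbFE.
have /card_gt0P [u] : (0 < #|[pred u | x u != x' u]|)%N by rewrite card_diff.
rewrite inE; move/le_configP: (xx') => /(_ u).
case xu: (x u); case x'u: (x' u) => // _ _.
apply: le_trans (kexp_lift_upd_le F_mono xu) (IHk _ _ _ _).
  move: card_diff; rewrite (cardD1 u) inE xu x'u add1n => -[<-].
  by apply: eq_card => w; rewrite !inE updE; case: (eqVneq w u) => [->|]; rewrite ?x'u.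
apply/le_configP => w; rewrite updE; case: eqP => [->|_]; first by rewrite x'u.
exact/le_configP.
Qed.

End Lift.

Definition line_mass (R : realFieldType) (V : finType) (m : config V -> R)
    (x : config V) (v : V) : R :=
  m (upd x v true) + m (upd x v false).

Section CondMarg.
Variables (R : realFieldType) (V : finType) (m : config V -> R).
Hypothesis m_ge0 : forall x, 0 <= m x.
Implicit Types (x y : config V) (v : V).

Lemma cond_marg_upd x v b : cond_marg m (upd x v b) v = cond_marg m x v.
Proof. by rewrite /cond_marg !upd_upd. Qed.

Lemma cond_marg_eq_upd x y v : y == upd x v (y v) -> cond_marg m y v = cond_marg m x v.
Proof. by move=> yx; rewrite /cond_marg !(upd_eq_upd _ yx). Qed.

Lemma cond_marg_feasible x v : line_mass m x v != 0 ->
  cond_marg m x v = m (upd x v true) / line_mass m x v.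
Proof. by rewrite /cond_marg /line_mass => /negbTE ->. Qed.

Lemma cond_marg_infeasible x v : line_mass m x v = 0 ->
  cond_marg m x v = 1.
Proof. by rewrite /cond_marg /line_mass => ->; rewrite eqxx. Qed.

Lemma infeasible_mass0 x v : line_mass m x v = 0 ->
  m (upd x v true) = 0 /\ m (upd x v false) = 0.
Proof. by move/eqP; rewrite paddr_eq0 // => /andP[/eqP -> /eqP ->]. Qed.

Lemma cond_marg_ge0 x v : 0 <= cond_marg m x v.
Proof. by rewrite /cond_marg; case: eqP => // _; rewrite divr_ge0 ?addr_ge0. Qed.

Lemma cond_marg_le1 x v : cond_marg m x v <= 1.
Proof.
rewrite /cond_marg; case: eqP => // /eqP nz.
by rewrite ler_pdivrMr ?mul1r ?lerDl // lt0r nz addr_ge0.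
Qed.

(* The configurations visited by the dynamics started at [ones]; infeasible boundary
   conditions (where [cond_marg] is 1 by convention) are met there only at [ones]. *)
Definition reachable x : bool := (0 < m x) || (x == ones V).

Lemma reachable_infeasible x v : reachable x ->
  line_mass m x v = 0 -> x = ones V.
Proof.
case/orP=> [mx /infeasible_mass0 [m1 m0] | /eqP //].
by move: mx; rewrite -(upd_self x v); case: (x v); rewrite ?m1 ?m0 ltxx.
Qed.

Lemma reachable_upd_true x v : reachable x -> cond_marg m x v != 0 ->
  reachable (upd x v true).
Proof.
move=> rx; have [inf|feas] := eqVneq (line_mass m x v) 0.
  suff -> : upd x v true = ones V by rewrite /reachable eqxx orbT.
  by rewrite (reachable_infeasible rx inf); apply/ffunP=> u; rewrite updE ffunE if_same.
rewrite cond_marg_feasible // => nz; apply/orP; left.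
by rewrite lt0r m_ge0 andbT; apply: contraNneq nz => ->; rewrite mul0r.
Qed.

Lemma reachable_upd_false x v : cond_marg m x v != 1 -> reachable (upd x v false).
Proof.
have [inf|feas] := eqVneq (line_mass m x v) 0.
  by rewrite cond_marg_infeasible // eqxx.
rewrite cond_marg_feasible // => n1; apply/orP; left.
rewrite lt0r m_ge0 andbT; apply: contraNneq n1 => m0.
by rewrite /line_mass m0 addr0 divff //; move: feas; rewrite /line_mass m0 addr0.
Qed.

Lemma cond_marg_mono x y v : monotone_system m -> le_config x y ->
  reachable x -> reachable y -> cond_marg m x v <= cond_marg m y v.
Proof.
move=> mono xy rx ry.
have [infy|feasy] := eqVneq (line_mass m y v) 0.
  by rewrite (cond_marg_infeasible infy) cond_marg_le1.
have [infx|feasx] := eqVneq (line_mass m x v) 0.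
  by move: xy; rewrite (reachable_infeasible rx infx) => /ones_le_config ->.
apply: mono; first by move=> u _; apply/le_configP: u.
  by rewrite /feasible lt0r feasx addr_ge0.
by rewrite /feasible lt0r feasy addr_ge0.
Qed.

End CondMarg.

Section Tilt.
Variables (R : realFieldType) (V : finType) (mu : config V -> R) (theta : R).
Hypotheses (mu_distr : is_distr mu) (theta_gt0 : 0 < theta).
Implicit Types (x : config V) (v : V).

Let mu_ge0 x : 0 <= mu x. Proof. by case: mu_distr. Qed.

Definition tilt_norm : R := \sum_(y : config V) mu y * theta ^+ norm1 y.

Lemma tilt_norm_gt0 : 0 < tilt_norm.
Proof.
case: mu_distr => _ mu1; have [y mu_y] : exists y, 0 < mu y.
  apply/existsP; apply: contraT => /existsPn mu_le0.
  suff : \sum_(y : config V) mu y = 0 by rewrite mu1 => /eqP; rewrite oner_eq0.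
  by rewrite big1 // => y _; apply/eqP; rewrite eq_le mu_ge0 andbT leNgt mu_le0.
rewrite /tilt_norm (bigD1 y) //=; apply: ltr_pwDl; first by rewrite mulr_gt0 // exprn_gt0.
by apply: sumr_ge0 => z _; rewrite mulr_ge0 ?mu_ge0 ?exprn_ge0 ?ltW.
Qed.

Lemma tiltE x : tilt theta mu x = mu x * (theta ^+ norm1 x / tilt_norm).
Proof. by rewrite /tilt mulrA. Qed.

Let weight_gt0 x : 0 < theta ^+ norm1 x / tilt_norm.
Proof. by rewrite divr_gt0 ?exprn_gt0 ?tilt_norm_gt0. Qed.

Lemma tilt_ge0 x : 0 <= tilt theta mu x.
Proof. by rewrite tiltE mulr_ge0 ?mu_ge0 ?ltW. Qed.

Lemma tilt_gt0 x : (0 < tilt theta mu x) = (0 < mu x).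
Proof. by rewrite tiltE pmulr_lgt0. Qed.

Lemma reachable_tilt x : reachable (tilt theta mu) x = reachable mu x.
Proof. by rewrite /reachable tilt_gt0. Qed.

Lemma norm1_upd x v : norm1 (upd x v true) = (norm1 (upd x v false)).+1.
Proof.
rewrite /norm1 (bigD1 v) //= [in RHS](bigD1 v) //= !upd_at; congr _.+1.
by apply: eq_bigr => u /negbTE uv; rewrite !updE uv.
Qed.

Lemma tilt_upd x v : let K := theta ^+ norm1 (upd x v false) / tilt_norm in
  tilt theta mu (upd x v true) = theta * mu (upd x v true) * K /\
  tilt theta mu (upd x v false) = mu (upd x v false) * K.
Proof. by rewrite !tiltE norm1_upd exprS; split; ring. Qed.

Lemma feasible_tilt x v : feasible (tilt theta mu) x v -> feasible mu x v.
Proof.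
rewrite /feasible; have [t1 t0] := tilt_upd x v => t_gt0.
rewrite lt0r addr_ge0 ?mu_ge0 // andbT; apply: contraTneq t_gt0.
move/(infeasible_mass0 mu_ge0) => [m1 m0].
by rewrite t1 t0 m1 m0 !(mulr0, mul0r) addr0 ltxx.
Qed.

Definition tilt_prob (c : R) : R := theta * c / (theta * c + (1 - c)).

Lemma tilt_prob_den_gt0 (c : R) : 0 <= c <= 1 -> 0 < theta * c + (1 - c).
Proof.
case/andP=> c0 c1; have [c_lt1|c_ge1] := ltrP c 1.
  by apply: ltr_wpDl; [rewrite mulr_ge0 // ltW | rewrite subr_gt0].
have -> : c = 1 by apply/eqP; rewrite eq_le c1 c_ge1.
by rewrite mulr1 subrr addr0.
Qed.

Lemma tilt_prob_mono (c c' : R) : 0 <= c -> c <= c' -> c' <= 1 -> tilt_prob c <= tilt_prob c'.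
Proof.
move=> c0 cc' c'1.
have d_gt0 := tilt_prob_den_gt0 (introT andP (conj c0 (le_trans cc' c'1))).
have d'_gt0 := tilt_prob_den_gt0 (introT andP (conj (le_trans c0 cc') c'1)).
rewrite /tilt_prob ler_pdivrMr // mulrAC ler_pdivlMr //.
suff : 0 <= theta * (c' - c) by nra.
by rewrite mulr_ge0 ?subr_ge0 // ltW.
Qed.

Lemma cond_marg_tilt x v :
  cond_marg (tilt theta mu) x v = tilt_prob (cond_marg mu x v).
Proof.
have [t1 t0] := tilt_upd x v; set K := _ / tilt_norm in t1 t0.
have K_gt0 : 0 < K by apply: weight_gt0.
set a := mu (upd x v true) in t1 *; set b := mu (upd x v false) in t0 *.
have [inf|feas] := eqVneq (a + b) 0.
  have [a0 b0] : a = 0 /\ b = 0 := infeasible_mass0 mu_ge0 inf.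
  have tinf : line_mass (tilt theta mu) x v = 0.
    by rewrite /line_mass t1 t0 a0 b0 !(mulr0, mul0r) addr0.
  by rewrite !cond_marg_infeasible // /tilt_prob subrr addr0 mulr1 divff // lt0r_neq0.
have ab_gt0 : 0 < a + b by rewrite lt0r feas addr_ge0 ?mu_ge0.
have tab_gt0 : 0 < theta * a + b.
  have [a_gt0|a_le0] := ltrP 0 a; first by apply: ltr_pwDl; [rewrite mulr_gt0 | exact: mu_ge0].
  by move: ab_gt0; rewrite (_ : a = 0) ?mulr0 //; apply/eqP; rewrite eq_le a_le0 mu_ge0.
have tfeas : line_mass (tilt theta mu) x v != 0.
  by rewrite /line_mass t1 t0 -mulrDl mulf_neq0 ?lt0r_neq0.
rewrite /tilt_prob (cond_marg_feasible feas) (cond_marg_feasible tfeas) /line_mass t1 t0 -mulrDl.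
rewrite -/a -/b; clearbody K a b.
by field; rewrite feas (addrC a) addrK !lt0r_neq0.
Qed.

Lemma monotone_system_tilt : monotone_system mu -> monotone_system (tilt theta mu).
Proof.
move=> mono v s t st fs ft; rewrite !cond_marg_tilt.
apply: tilt_prob_mono; rewrite ?cond_marg_ge0 ?cond_marg_le1 //.
exact: mono st (feasible_tilt fs) (feasible_tilt ft).
Qed.

End Tilt.

(* The fibre inequality behind [stoch_le_gd_alg]: [al] and [be] are the masses of the two
   configurations differing at the updated site, [F0 <= F1 <= Fs] the test function at
   0, 1 and star there, and [c], [tilt_prob t c] the conditional marginals of mu and of its
   tilt. *)
Lemma fiber_ineq (R : realFieldType) (t c al be F0 F1 Fs : R) :
  0 < t -> t < 1 -> 0 <= c <= 1 -> F0 <= F1 -> F1 <= Fs -> be * c <= al * (1 - c) ->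
  let ct := tilt_prob t c in
  (al + be) * (c * (t * F1 + (1 - t) * Fs) + (1 - c) * F0) <=
  al * (t * (ct * F1 + (1 - ct) * F0) + (1 - t) * Fs) + be * (ct * F1 + (1 - ct) * F0).
Proof.
move=> t_gt0 t_lt1 c01 F01 F1s cross /=; rewrite -subr_ge0 /tilt_prob.
have d_gt0 := tilt_prob_den_gt0 t_gt0 c01; case/andP: c01 => _ c1.
set d := t * c + (1 - c) in d_gt0 *.
set D := (X in 0 <= X).
have -> : D = (1 - t) * (al * (1 - c) - be * c) * (Fs - F1 + (1 - c) * (F1 - F0) / d).
  by rewrite /D /d; field; rewrite lt0r_neq0.
rewrite mulr_ge0 ?mulr_ge0 ?subr_ge0 ?(ltW t_lt1) //.
by rewrite addr_ge0 ?subr_ge0 // divr_ge0 ?mulr_ge0 ?subr_ge0 // ltW.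
Qed.

Section FiniteType.
Variables (R : realFieldType) (T : finType).

Lemma increasing_extension (le : rel T) (A : pred T) (h : T -> R) :
  reflexive le -> transitive le -> {in A &, {homo h : x y / le x y >-> x <= y}} ->
  exists2 h' : T -> R, {homo h' : x y / le x y >-> x <= y} & {in A, h' =1 h}.
Proof.
move=> le_rf le_tr h_mono; pose h0 := - \sum_z `|h z|.
have h0_le z : h0 <= h z.
  rewrite /h0 lerNl (bigD1 z) //= -normrN; apply: ler_wpDr; last exact: ler_norm.
  by apply: sumr_ge0 => ? _.
exists (fun y => \big[Num.max/h0]_(z | (z \in A) && le z y) h z) => [x y xy | x Ax].
  apply/bigmax_leP; split=> [|z /andP[Az zx]].
    have [z zy|none] := pickP (fun z => (z \in A) && le z y); last by rewrite big_pred0.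
    by apply: le_trans (h0_le z) _; apply: le_bigmax_cond.
  by apply: le_bigmax_cond; rewrite Az (le_tr _ _ _ zx xy).
apply/eqP; rewrite eq_le le_bigmax_cond ?Ax ?le_rf // andbT.
by apply/bigmax_leP; split=> // z /andP[Az zx]; apply: h_mono.
Qed.

Lemma dTV_signed (p q : T -> R) (A : pred T) :
  2^-1 * \sum_x (if x \in A then p x - q x else q x - p x) =
  \sum_(x in A) (p x - q x) - (\sum_x p x - \sum_x q x) / 2.
Proof.
rewrite [\sum_(x in A) _]big_mkcond -sumrB mulr_sumr mulr_suml -sumrB /=.
by apply: eq_bigr => x _; case: (x \in A); field.
Qed.

Lemma dTV_ge_set (p q : T -> R) (A : pred T) :
  \sum_(x in A) (p x - q x) - (\sum_x p x - \sum_x q x) / 2 <= dTV p q.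
Proof.
rewrite -dTV_signed ler_wpM2l ?invr_ge0 ?ler0n //.
by apply: ler_sum => x _; case: (x \in A); rewrite ?ler_norm // distrC ler_norm.
Qed.

Lemma dTV_set (p q : T -> R) (A : pred T) :
  {in A, forall x, q x <= p x} -> {in [predC A], forall x, p x <= q x} ->
  dTV p q = \sum_(x in A) (p x - q x) - (\sum_x p x - \sum_x q x) / 2.
Proof.
move=> qp pq; rewrite -dTV_signed /dTV; congr (_ * _); apply: eq_bigr => x _.
case: ifPn => [/qp|/(pq x)]; first by move=> le; rewrite ger0_norm // subr_ge0.
by rewrite distrC => le; rewrite ger0_norm // subr_ge0.
Qed.

End FiniteType.

Section Steps.
Variables (R : realFieldType) (V : finType) (mu : config V -> R) (theta : R).

Definition alg_site (F : lconfig V -> R) (x : lconfig V) (v : V) : R :=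
  if x v is None then F x else
  let c := cond_marg (tilt theta mu) (contr x) v in
  c * F (upd x v (Some true)) + (1 - c) * F (upd x v (Some false)).

Lemma kexp_alg F x :
  kexp (alg_kernel theta mu) F x = #|V|%:R^-1 * \sum_v alg_site F x v.
Proof.
rewrite /kexp /alg_kernel; under eq_bigr do rewrite -mulrA mulr_suml.
rewrite -mulr_sumr exchange_big /=; congr (_ * _); apply: eq_bigr => v _.
rewrite /alg_site; case: (x v) => [b|]; last first.
  by rewrite (bigD1 x) //= eqxx mul1r big1 ?addr0 // => y /negbTE ->; rewrite mul0r.
set c := cond_marg _ _ v.
transitivity (\sum_(y : lconfig V) if y == upd x v (y v) then
  (if y v is Some b then (if b then c else 1 - c) * F y else 0) else 0).
  apply: eq_bigr => y _; case: (y == _); last by rewrite mul0r.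
  by case: (y v) => [[]|]; rewrite /= ?mul0r.
by rewrite sum_eq_upd sum_option_bool !upd_at add0r.
Qed.

Definition gd_weight (x : config V) (v : V) : R :=
  if x v then cond_marg mu x v else 1 - cond_marg mu x v.

Lemma mstep_gd (p : config V -> R) y :
  mstep (gd_kernel mu) p y = #|V|%:R^-1 * \sum_v line_mass p y v * gd_weight y v.
Proof.
rewrite /mstep /gd_kernel; under eq_bigr do rewrite mulrCA.
rewrite -mulr_sumr; congr (_ * _); under eq_bigr do rewrite mulr_sumr.
rewrite exchange_big /=; apply: eq_bigr => v _.
transitivity (\sum_(x : config V) if x == upd y v (x v) then p x * gd_weight y v else 0).
  apply: eq_bigr => x _; rewrite eq_upd_sym /gd_weight.
  by case: eqP => [/eqP yx|_]; rewrite ?mulr0 // (cond_marg_eq_upd mu yx).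
by rewrite sum_eq_upd big_bool mulrDl.
Qed.

End Steps.

Section Comparison.
Variables (R : realFieldType) (V : finType) (mu : config V -> R) (theta : R).
Hypotheses (mu_distr : is_distr mu) (mu_mono : monotone_system mu).
Hypotheses (theta_gt0 : 0 < theta) (theta_lt1 : theta < 1).
Implicit Types (p f : config V -> R) (x y z : config V) (v : V).

Let mu_ge0 x : 0 <= mu x. Proof. by case: mu_distr. Qed.
Let theta01 : 0 <= theta <= 1. Proof. by rewrite !ltW. Qed.

(* [p = f mu] with [f] increasing, except possibly at [ones] when [mu ones = 0]:
   Glauber dynamics started at [ones] may keep mass there. *)
Definition incr_density p f : Prop :=
  [/\ forall z, 0 <= p z, {homo f : x y / le_config x y >-> x <= y} &
      forall z, (z != ones V) || (0 < mu z) -> p z = f z * mu z].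

Lemma upd_false_neq_ones x v : upd x v false != ones V.
Proof. by apply/eqP => /ffunP /(_ v); rewrite upd_at ffunE. Qed.

Lemma density_le p f z : incr_density p f -> f z * mu z <= p z.
Proof.
case=> p_ge0 _ pE; have [zE|] := boolP ((z != ones V) || (0 < mu z)); first by rewrite pE.
rewrite negb_or => /andP[_ mz]; have -> : mu z = 0 by apply/eqP; rewrite eq_le leNgt mz mu_ge0.
by rewrite mulr0.
Qed.

Lemma density_cross p f s v : incr_density p f ->
  p (upd s v false) * cond_marg mu s v <= p (upd s v true) * (1 - cond_marg mu s v).
Proof.
move=> dens; have [_ f_mono pE] := dens.
set a := mu (upd s v true); set b := mu (upd s v false).
have be_eq : p (upd s v false) = f (upd s v false) * b by rewrite pE ?upd_false_neq_ones.
have cross : p (upd s v false) * a <= p (upd s v true) * b.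
  apply: le_trans (ler_wpM2r (mu_ge0 _) (density_le (upd s v true) dens)).
  rewrite be_eq mulrAC -!mulrA ler_wpM2r ?mulr_ge0 ?mu_ge0 //.
  by apply: f_mono; apply: le_config_upd; rewrite ?le_config_refl.
have [inf|feas] := eqVneq (line_mass mu s v) 0.
  have [_ b0] : a = 0 /\ b = 0 := infeasible_mass0 mu_ge0 inf.
  by rewrite (cond_marg_infeasible inf) be_eq b0 subrr !mulr0 mul0r.
have -> : 1 - cond_marg mu s v = b / line_mass mu s v.
  by rewrite cond_marg_feasible // /line_mass -/a -/b; field.
by rewrite cond_marg_feasible // !mulrA ler_wpM2r ?invr_ge0 ?addr_ge0 ?mu_ge0.
Qed.

Lemma line_average g x v : line_mass mu x v != 0 ->
  (g (upd x v true) * mu (upd x v true) + g (upd x v false) * mu (upd x v false))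
    / line_mass mu x v
  = cond_marg mu x v * g (upd x v true) + (1 - cond_marg mu x v) * g (upd x v false).
Proof. by move=> feas; rewrite cond_marg_feasible // /line_mass; field. Qed.

Lemma mu_le_line_mass x v : mu x <= line_mass mu x v.
Proof.
by rewrite /line_mass -{1}(upd_self x v); case: (x v); rewrite ?lerDl ?lerDr mu_ge0.
Qed.

Definition gd_density p x : R := #|V|%:R^-1 * \sum_v
  (if line_mass mu x v == 0 then 0 else line_mass p x v / line_mass mu x v).

Lemma mstep_gd_density p f z : incr_density p f -> (z != ones V) || (0 < mu z) ->
  mstep (gd_kernel mu) p z = gd_density p z * mu z.
Proof.
case=> _ _ pE zE; rewrite mstep_gd /gd_density -mulrA mulr_suml; congr (_ * _).
apply: eq_bigr => v _; rewrite /gd_weight.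
have [inf|feas] := eqVneq (line_mass mu z v) 0.
  have [m1 m0] := infeasible_mass0 mu_ge0 inf.
  have mz0 : mu z = 0 by rewrite -(upd_self z v); case: (z v).
  rewrite mul0r cond_marg_infeasible //; case zv: (z v); last by rewrite subrr mulr0.
  have z_neq1 : z != ones V by move: zE; rewrite mz0 ltxx orbF.
  rewrite /line_mass -zv upd_self pE // pE ?upd_false_neq_ones //.
  by rewrite mz0 m0 !mulr0 addr0 mul0r.
have mzE : mu z = if z v then mu (upd z v true) else mu (upd z v false).
  by rewrite -{1}(upd_self z v); case: (z v).
rewrite cond_marg_feasible // mzE; rewrite /line_mass in feas *.
by case: (z v); field.
Qed.

Lemma gd_density_mono p f x y : incr_density p f -> le_config x y ->
  0 < mu x -> 0 < mu y -> gd_density p x <= gd_density p y.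
Proof.
move=> dens xy mx my; have [_ f_mono pE] := dens.
rewrite ler_wpM2l ?invr_ge0 ?ler0n //; apply: ler_sum => v _.
have Bx : 0 < line_mass mu x v := lt_le_trans mx (mu_le_line_mass x v).
have By : 0 < line_mass mu y v := lt_le_trans my (mu_le_line_mass y v).
rewrite !gt_eqF //.
have [x1|x1] := eqVneq (upd x v true) (ones V).
  have yx : y == upd x v (y v).
    apply/eq_updP => u uv; move/ffunP/(_ u): x1; rewrite updE (negPf uv) ffunE => xu.
    by move/le_configP/(_ u): xy; rewrite xu; case: (y u).
  by rewrite /line_mass !(upd_eq_upd _ yx).
have reach z : 0 < mu z -> reachable mu z by move=> mz; rewrite /reachable mz.
have c_le : cond_marg mu x v <= cond_marg mu y v.
  by apply: cond_marg_mono; rewrite ?reach.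
have [c0 c1] := (cond_marg_ge0 mu_ge0 x v, cond_marg_le1 mu_ge0 y v).
have f0_le := f_mono _ _ (le_config_upd v xy (leqnn false)).
have f1_le := f_mono _ _ (le_config_upd v xy (leqnn true)).
have f01 := f_mono _ _ (@le_config_upd _ x x v false true (le_config_refl x) isT).
have y_ge : f (upd y v true) * mu (upd y v true) + f (upd y v false) * mu (upd y v false)
    <= line_mass p y v.
  by rewrite /line_mass [p (upd y v false)]pE ?upd_false_neq_ones ?lerD2r ?density_le.
have iBy : 0 <= (line_mass mu y v)^-1 by rewrite invr_ge0 ltW.
apply: le_trans _ (ler_wpM2r iBy y_ge).
rewrite /line_mass [p (upd x v true)]pE ?x1 // [p (upd x v false)]pE ?upd_false_neq_ones //.
rewrite !line_average ?gt_eqF //; nra.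
Qed.

Lemma mstep_gd_ge0 p : (forall z, 0 <= p z) -> forall z, 0 <= mstep (gd_kernel mu) p z.
Proof.
move=> p_ge0 z; rewrite mstep_gd mulr_ge0 ?invr_ge0 ?ler0n //.
apply: sumr_ge0 => v _; rewrite mulr_ge0 ?addr_ge0 // /gd_weight.
by case: (z v); rewrite ?subr_ge0 ?cond_marg_ge0 ?cond_marg_le1.
Qed.

Lemma incr_density_step p f : incr_density p f ->
  exists f', incr_density (mstep (gd_kernel mu) p) f'.
Proof.
move=> dens; have [p_ge0 _ _] := dens.
have [f' f'_mono f'E] := increasing_extension (A := [pred x | 0 < mu x])
  (h := gd_density p) (@le_config_refl V) (@le_config_trans V)
  (fun x y mx my xy => gd_density_mono dens xy mx my).
exists f'; split=> [|//|z zE]; first exact: mstep_gd_ge0.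
rewrite (mstep_gd_density dens zE); have [mz|] := ltrP 0 (mu z); first by rewrite f'E.
move=> mz; have -> : mu z = 0 by apply/eqP; rewrite eq_le mz mu_ge0.
by rewrite !mulr0.
Qed.

Definition lift_law p : lconfig V -> R := kpush (lift_kernel theta) p.

Definition stoch_le (lam nu : lconfig V -> R) : Prop :=
  forall F, increasing F -> \sum_s lam s * F s <= \sum_s nu s * F s.

Lemma stoch_le_trans lam nu rho : stoch_le lam nu -> stoch_le nu rho -> stoch_le lam rho.
Proof. by move=> le1 le2 F F_mono; apply: le_trans (le1 F F_mono) (le2 F F_mono). Qed.

Definition reach_supported (nu : lconfig V -> R) : Prop :=
  forall s, ~~ reachable mu (contr s) -> nu s = 0.

Lemma reach_supported_lift_law p f : incr_density p f -> reach_supported (lift_law p).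
Proof.
case=> _ _ pE s s_unreach; rewrite /lift_law /kpush big1 // => x _.
have [->|/lift_kernel_neq0 sx] := eqVneq (lift_kernel theta x s) 0; first by rewrite mulr0.
move: s_unreach; rewrite sx /reachable negb_or => /andP[mx x_neq1].
have mx0 : mu x = 0 by apply/eqP; rewrite eq_le leNgt mx mu_ge0.
by rewrite pE ?x_neq1 // mx0 !mulr0 mul0r.
Qed.

Lemma reach_supported_refresh nu : reach_supported nu -> reach_supported (refresh theta nu).
Proof.
move=> nu_supp s s_unreach; rewrite /refresh big1 // => t _.
have [->|/lift_kernel_neq0 ts] := eqVneq (lift_kernel theta (contr t) s) 0.
  by rewrite mulr0.
by rewrite nu_supp ?mul0r // -ts.
Qed.

Lemma reach_supported_alg nu :
  reach_supported nu -> reach_supported (mstep (alg_kernel theta mu) nu).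
Proof.
move=> nu_supp s s_unreach; rewrite /mstep big1 // => t _.
have [t_reach|t_unreach] := boolP (reachable mu (contr t)); last by rewrite nu_supp ?mul0r.
rewrite /alg_kernel big1 ?mulr0 // => v _.
case: (t v) => [b|]; last by case: eqP => // st; move: s_unreach; rewrite st t_reach.
case: ifP => // /andP[/eqP st s_star].
have cs : contr s = upd (contr t) v (s v != Some false) by rewrite {1}st contr_upd.
have [tilt_ge0 reach_t] := (tilt_ge0 mu_distr theta_gt0, reachable_tilt mu_distr theta_gt0).
move: s_star cs; case: (s v) => [[]|] //= _ cs.
  apply/eqP; apply: contraNT s_unreach => nz.
  by rewrite cs -reach_t reachable_upd_true ?reach_t.
apply/eqP; rewrite subr_eq0; apply: contraNT s_unreach => n1.
by rewrite cs -reach_t reachable_upd_false // eq_sym.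
Qed.

Lemma sum_lift_law_contr p (G : config V -> R) :
  \sum_s lift_law p s * G (contr s) = \sum_x p x * G x.
Proof.
rewrite (sum_kpush _ _ (G \o @contr V)); apply: eq_bigr => x _.
by rewrite kexp_lift_contr.
Qed.

Lemma stoch_le_contr p nu (G : config V -> R) : stoch_le (lift_law p) nu ->
  {homo G : x y / le_config x y >-> x <= y} ->
  \sum_x p x * G x <= \sum_x contr_law nu x * G x.
Proof.
move=> le G_mono; rewrite -sum_lift_law_contr -sum_contr_law.
by apply: (le (G \o @contr V)) => s t /contr_mono /G_mono.
Qed.

Lemma stoch_le_refresh p nu :
  stoch_le (lift_law p) nu -> stoch_le (lift_law p) (refresh theta nu).
Proof.
move=> le F F_mono; under [X in _ <= X]eq_bigr do rewrite refreshE.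
by rewrite /lift_law !sum_kpush; apply: stoch_le_contr le (kexp_lift_mono theta01 F_mono).
Qed.

Lemma alg_site_mono F s t v : increasing F -> le_lconfig s t ->
  reachable mu (contr s) -> reachable mu (contr t) ->
  alg_site mu theta F s v <= alg_site mu theta F t v.
Proof.
move=> F_mono st rs rt; rewrite /alg_site.
have tilt_ge0 := tilt_ge0 mu_distr theta_gt0.
set cs := cond_marg _ (contr s) v; set ct := cond_marg _ (contr t) v.
have cs0 : 0 <= cs by apply: cond_marg_ge0.
have cs1 : cs <= 1 by apply: cond_marg_le1.
have F0 := F_mono _ _ (le_lconfig_upd v st (leqnn (lrank (Some false)))).
have F1 := F_mono _ _ (le_lconfig_upd v st (leqnn (lrank (Some true)))).
case tv: (t v) => [b'|]; last first.
  case: (s v); last exact: F_mono.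
  have G1 : F (upd s v (Some true)) <= F t by apply/F_mono/le_lconfig_updl; rewrite ?tv.
  have G0 : F (upd s v (Some false)) <= F t by apply/F_mono/le_lconfig_updl; rewrite ?tv.
  by move=> _; nra.
case sv: (s v) => [b|]; last by move/le_lconfigP/(_ v): st; rewrite sv tv; case: b' {tv}.
have ct0 : 0 <= ct by apply: cond_marg_ge0.
have ct1 : ct <= 1 by apply: cond_marg_le1.
have c_le : cs <= ct.
  apply: cond_marg_mono; rewrite ?reachable_tilt ?contr_mono //.
  exact: monotone_system_tilt.
have F01 : F (upd t v (Some false)) <= F (upd t v (Some true)).
  by apply: F_mono; rewrite le_lconfig_upd ?le_lconfig_refl.
nra.
Qed.

Lemma stoch_le_alg lam nu : reach_supported lam -> reach_supported nu -> stoch_le lam nu ->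
  stoch_le (mstep (alg_kernel theta mu) lam) (mstep (alg_kernel theta mu) nu).
Proof.
move=> lam_supp nu_supp le F F_mono; rewrite !sum_mstep.
have alg_mono : {in [pred s | reachable mu (contr s)] &,
    {homo kexp (alg_kernel theta mu) F : s t / le_lconfig s t >-> s <= t}}.
  move=> s t rs rt st; rewrite !kexp_alg ler_wpM2l ?invr_ge0 ?ler0n //.
  by apply: ler_sum => v _; apply: alg_site_mono.
have [H H_mono HE] :=
  increasing_extension (@le_lconfig_refl V) (@le_lconfig_trans V) alg_mono.
have sum_H rho : reach_supported rho ->
    \sum_s rho s * kexp (alg_kernel theta mu) F s = \sum_s rho s * H s.
  move=> rho_supp; apply: eq_bigr => s _.
  have [rs|us] := boolP (reachable mu (contr s)); first by rewrite HE.
  by rewrite rho_supp // !mul0r.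
by rewrite !sum_H //; apply: le.
Qed.

Lemma gd_alg_fiber_le p f F (s : config V) (y : lconfig V) v :
  incr_density p f -> increasing F -> s v = false -> y v = Some false ->
  (forall u, u != v -> contr y u = s u) ->
  \sum_b \sum_o lift1 theta b o *
     (line_mass p (upd s v b) v * gd_weight mu (upd s v b) v * F (upd y v o))
  <= \sum_b \sum_o lift1 theta b o * (p (upd s v b) * alg_site mu theta F (upd y v o) v).
Proof.
move=> dens F_mono sv yv ys.
rewrite !big_bool !sum_option_bool /= /line_mass /gd_weight /alg_site !upd_at /=.
rewrite !upd_upd !contr_upd !cond_marg_upd /=.
rewrite (cond_marg_eq_upd _ (_ : contr y == upd s v (contr y v))); last exact/eq_updP.
rewrite cond_marg_tilt // !(mul0r, mul1r, addr0, add0r).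
have c01 : 0 <= cond_marg mu s v <= 1 by rewrite cond_marg_ge0 ?cond_marg_le1.
have F01 : F (upd y v (Some false)) <= F (upd y v (Some true)).
  by apply: F_mono; rewrite le_lconfig_upd ?le_lconfig_refl.
have F1s : F (upd y v (Some true)) <= F (upd y v None).
  by apply: F_mono; rewrite le_lconfig_upd ?le_lconfig_refl.
have := fiber_ineq theta_gt0 theta_lt1 c01 F01 F1s (density_cross s v dens) => /=.
lra.
Qed.

Lemma stoch_le_gd_alg p f : incr_density p f ->
  stoch_le (lift_law (mstep (gd_kernel mu) p)) (mstep (alg_kernel theta mu) (lift_law p)).
Proof.
move=> dens F F_mono.
pose S x v := line_mass p x v * gd_weight mu x v.
have -> : \sum_s lift_law (mstep (gd_kernel mu) p) s * F s = #|V|%:R^-1 *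
    \sum_v \sum_x \sum_s lift_kernel theta x s * (S x v * F s).
  rewrite /lift_law sum_kpush [in RHS]exchange_big mulr_sumr /=; apply: eq_bigr => x _.
  rewrite mstep_gd -mulrA; congr (_ * _); rewrite /kexp mulr_suml; apply: eq_bigr => v _.
  by rewrite mulr_sumr; apply: eq_bigr => s _; rewrite mulrCA.
have -> : \sum_s mstep (alg_kernel theta mu) (lift_law p) s * F s = #|V|%:R^-1 *
    \sum_v \sum_x \sum_s lift_kernel theta x s * (p x * alg_site mu theta F s v).
  rewrite sum_mstep /lift_law sum_kpush [in RHS]exchange_big mulr_sumr /=; apply: eq_bigr => x _.
  have -> : kexp (lift_kernel theta) (kexp (alg_kernel theta mu) F) x = \sum_s
      lift_kernel theta x s * (#|V|%:R^-1 * \sum_v alg_site mu theta F s v).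
    by apply: eq_bigr => s _; rewrite kexp_alg.
  rewrite [in RHS]exchange_big mulr_sumr [in RHS]mulr_sumr; apply: eq_bigr => s _.
  by rewrite !mulr_sumr; apply: eq_bigr => v _; ring.
rewrite ler_wpM2l ?invr_ge0 ?ler0n //; apply: ler_sum => v _.
rewrite !(sum_lift_fiber theta v); apply: ler_sum => s /eqP sv; apply: ler_sum => y /eqP yv.
have [->|nz] := eqVneq (lift_kernel_off theta s y v) 0; first by rewrite !mul0r.
rewrite ler_wpM2l ?lift_kernel_off_ge0 //.
exact: gd_alg_fiber_le dens F_mono sv yv (lift_kernel_off_neq0 nz).
Qed.

Lemma stoch_le_mass p nu : stoch_le (lift_law p) nu -> \sum_x p x = \sum_x contr_law nu x.
Proof.
move=> le; have := stoch_le_contr le (G := fun=> 1) (fun _ _ _ => lexx _).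
have := stoch_le_contr le (G := fun=> -1) (fun _ _ _ => lexx _).
rewrite -!big_distrl /= !mulr1 !mulrN1 lerN2 => ge le'.
by apply/eqP; rewrite eq_le le' ge.
Qed.

Lemma stoch_le_upset p nu (A : pred (config V)) : stoch_le (lift_law p) nu ->
  (forall x y, le_config x y -> x \in A -> y \in A) ->
  \sum_(x in A) p x <= \sum_(x in A) contr_law nu x.
Proof.
move=> le A_up; have indE q : \sum_x q x * (x \in A)%:R = \sum_(x in A) q x.
  by rewrite [in RHS]big_mkcond; apply: eq_bigr => x _; case: (x \in A); rewrite ?mulr1 ?mulr0.
rewrite -!indE; apply: stoch_le_contr le _ => x y xy.
by case xA: (x \in A); rewrite ?ler0n // (A_up x y xy xA).
Qed.

Lemma dTV_le_stoch p f nu : incr_density p f -> stoch_le (lift_law p) nu ->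
  dTV p mu <= dTV (contr_law nu) mu.
Proof.
move=> [p_ge0 f_mono pE] le.
pose A := [pred x | (1 < f x) || (x == ones V) && (mu x == 0)].
have A_up x y : le_config x y -> x \in A -> y \in A.
  move=> xy; rewrite !inE => /orP[fx|/andP[/eqP x1 mx]].
    by rewrite (lt_le_trans fx (f_mono _ _ xy)).
  by move: xy mx; rewrite x1 => /ones_le_config ->; rewrite eqxx => ->; rewrite orbT.
have mu_le_p : {in A, forall x, mu x <= p x}.
  move=> x; rewrite inE; have [->|mx] := eqVneq (mu x) 0; first by rewrite p_ge0.
  rewrite andbF orbF => fx; have mx_gt0 : 0 < mu x by rewrite lt0r mx mu_ge0.
  by rewrite pE ?mx_gt0 ?orbT // ler_peMl ?mu_ge0 ?ltW.
have p_le_mu : {in [predC A], forall x, p x <= mu x}.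
  move=> x; rewrite !inE negb_or -leNgt => /andP[fx1 /nandP x_mu].
  rewrite pE ?ler_piMl ?mu_ge0 //; case: x_mu => [-> //|mx].
  by rewrite orbC lt0r mx mu_ge0.
rewrite (@dTV_set _ (config V) p mu A mu_le_p p_le_mu).
apply: le_trans (dTV_ge_set _ _ A).
by rewrite (stoch_le_mass le) lerD2r !sumrB lerD2r stoch_le_upset.
Qed.

Lemma incr_density_dirac_ones : exists f, incr_density (dirac R (ones V)) f.
Proof.
exists (fun z => if z == ones V then (mu (ones V))^-1 else 0).
split=> [z | x y xy | z z1]; rewrite /dirac.
- by case: (z == _).
- have [x1 | _] := eqVneq x (ones V); last by case: (y == _); rewrite ?invr_ge0.
  by move: xy; rewrite x1 => /ones_le_config ->; rewrite eqxx.
- case: eqVneq => [z1'|]; last by rewrite mul0r.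
  by rewrite z1' mulVf // lt0r_neq0 //; move: z1; rewrite z1' eqxx.
Qed.

Lemma law_invariant T2 t : exists f,
  [/\ incr_density (law_gd mu t) f, reach_supported (law_alg theta mu T2 t)
    & stoch_le (lift_law (law_gd mu t)) (law_alg theta mu T2 t)].
Proof.
elim: t => [|t [f [dens supp le]]].
  have [f dens] := incr_density_dirac_ones; exists f; split=> //=.
    move=> s; have [-> //|/lift_kernel_neq0 ->] := eqVneq (lift_kernel theta (ones V) s) 0.
    by rewrite /reachable eqxx orbT.
  by move=> F _; apply: ler_sum => s _; rewrite /lift_law kpush_dirac.
have [f' dens'] := incr_density_step dens; exists f'; rewrite /=.
set nu := if _ then _ else _.
have nu_supp : reach_supported nu.
  by rewrite /nu; case: ifP => _ //; apply: reach_supported_refresh.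
have nu_le : stoch_le (lift_law (law_gd mu t)) nu.
  by rewrite /nu; case: ifP => _ //; apply: stoch_le_refresh.
split=> //; first exact: reach_supported_alg.
apply: stoch_le_trans (stoch_le_gd_alg dens) _.
exact: stoch_le_alg (reach_supported_lift_law dens) nu_supp nu_le.
Qed.

End Comparison.

Theorem lemma3p2 (R : realFieldType) (V : finType) (mu : config V -> R)
  (theta : R) (T1 T2 : nat) :
  is_distr mu -> monotone_system mu ->
  0 < theta < 1 -> (1 <= T1)%N -> (1 <= T2)%N ->
  forall t : nat, (t <= T1 * T2)%N ->
    dTV (law_gd mu t) mu <= dTV (contr_law (law_alg theta mu T2 t)) mu.
Proof.
move=> mu_distr mu_mono /andP[theta_gt0 theta_lt1] _ _ t _.
have [f [dens _ le]] := law_invariant mu_distr mu_mono theta_gt0 theta_lt1 T2 t.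
exact: dTV_le_stoch dens le.
Qed.
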